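(* Let $\mu$ be a singular cardinal, let $\vec{\mu}=\langle\mu_i:i<\operatorname{cf}(\mu)\rangle$ be an increasing sequence of regular cardinals cofinal in $\mu$, and let $\rho$ be a regular cardinal. Suppose $\vec f=\langle f_\nu:\nu<\rho\rangle$ is a sequence of functions in $\prod_{i<\operatorname{cf}(\mu)}\mu_i$ such that $(\vec\mu,\vec f)$ is a scale of length $\rho$ for $\mu$. Then $\rho\in\operatorname{spec}^*(A)$, where $A=\{\mu_i:i<\operatorname{cf}(\mu)\}$.
   Context: $(\vec\mu,\vec f)$ is a scale of length $\rho$ for $\mu$ if $\vec f$ is increasing and cofinal in $\prod_{i<\operatorname{cf}(\mu)}\mu_i$ modulo the ideal of bounded subsets of $\{\mu_i:i<\operatorname{cf}(\mu)\}$ (i.e., $f<g$ mod this ideal iff $f(\mu_i)<g(\mu_i)$ for all sufficiently large $i$). For a set $A$ of regular cardinals, $\prod A$ is the set of functions on $A$ with $f(a)\in a$; for $\mathcal{G}\subseteq\prod A$, $\operatorname{ub}(\mathcal{G})$ is the set of $a\in A$ with $\{f(a):f\in\mathcal{G}\}$ unbounded in $a$. $\operatorname{spec}^*(A)$ is the set of regular $\lambda$ such that there is $\mathcal{F}\subseteq\prod A$ of size $\lambda$ such that for every $\mathcal{F}_0\subseteq\mathcal{F}$ of size $\lambda$, $\operatorname{ub}(\mathcal{F}_0)$ is unbounded in $\sup(A)$. *)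

(* Infinite cardinals are represented as types equipped with a
   strict well-order that is an initial ordinal (not injectable into any proper
   initial segment). *)

Definition injective {A B : Type} (f : A -> B) : Prop :=
  forall a b, f a = f b -> a = b.

Definition equipotent (A B : Type) : Prop :=
  exists (f : A -> B) (g : B -> A),
    (forall a, g (f a) = a) /\ (forall b, f (g b) = b).

Definition well_order {T : Type} (lt : T -> T -> Prop) : Prop :=
  (forall x, ~ lt x x) /\
  (forall x y z, lt x y -> lt y z -> lt x z) /\
  (forall x y, lt x y \/ x = y \/ lt y x) /\
  well_founded lt.

Definition seg_lt {T : Type} (lt : T -> T -> Prop) (x : T)
  (a b : {y : T | lt y x}) : Prop := lt (proj1_sig a) (proj1_sig b).

Definition is_cardinal (T : Type) (lt : T -> T -> Prop) : Prop :=
  well_order lt /\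
  forall x : T, ~ exists f : T -> {y : T | lt y x}, injective f.

Definition infinite (T : Type) : Prop :=
  exists f : nat -> T, injective f.

Definition unbounded {T : Type} (lt : T -> T -> Prop) (S : T -> Prop) : Prop :=
  forall x, exists y, S y /\ ~ lt y x.

Definition is_regular (T : Type) (lt : T -> T -> Prop) : Prop :=
  is_cardinal T lt /\ infinite T /\
  forall S : T -> Prop, unbounded lt S -> equipotent {y : T | S y} T.

Definition is_singular (T : Type) (lt : T -> T -> Prop) : Prop :=
  is_cardinal T lt /\ infinite T /\ ~ is_regular T lt.

(* The sequence mu : K -> M is <mu_i : i < cf(mu)>.  Elements of
   prod_{i} mu_i are functions g : K -> M with g i < mu_i. *)
Definition in_prod {K M : Type} (ltM : M -> M -> Prop) (mu : K -> M)
  (g : K -> M) : Prop := forall i, ltM (g i) (mu i).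

Definition eventually {K : Type} (ltK : K -> K -> Prop) (Q : K -> Prop) : Prop :=
  exists i0, forall i, ~ ltK i i0 -> Q i.

Definition is_scale {K M P : Type} (ltK : K -> K -> Prop) (ltM : M -> M -> Prop)
  (mu : K -> M) (ltP : P -> P -> Prop) (f : P -> K -> M) : Prop :=
  (forall nu, in_prod ltM mu (f nu)) /\
  (forall nu nu', ltP nu nu' -> eventually ltK (fun i => ltM (f nu i) (f nu' i))) /\
  (forall g, in_prod ltM mu g -> exists nu, eventually ltK (fun i => ltM (g i) (f nu i))).

(* ub(G): the indices i (i.e. the points mu_i of A) such that
   {g(mu_i) : g in G} is unbounded in mu_i. *)
Definition ub {K M : Type} (ltM : M -> M -> Prop) (mu : K -> M)
  (G : (K -> M) -> Prop) (i : K) : Prop :=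
  forall x, ltM x (mu i) -> exists g, G g /\ ltM x (g i).

Definition in_spec_star {K M : Type} (ltM : M -> M -> Prop) (mu : K -> M)
  (P : Type) (ltP : P -> P -> Prop) : Prop :=
  is_regular P ltP /\
  exists F : (K -> M) -> Prop,
    (forall g, F g -> in_prod ltM mu g) /\
    equipotent {g : K -> M | F g} P /\
    forall F0 : (K -> M) -> Prop,
      (forall g, F0 g -> F g) ->
      equipotent {g : K -> M | F0 g} P ->
      forall x : M, exists i, ub ltM mu F0 i /\ ltM x (mu i).

(* Take F to be the range of the scale.  If F0 is a subfamily of F of full
   size rho, then, rho being an initial ordinal, the indices nu with f_nu in F0 are
   cofinal in rho.  Were ub(F0) bounded below mu, some h in prod mu_i would
   bound F0 pointwise at every large i; but h is eventually below some f_nu,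
   hence below every later f_nu' in F0, a contradiction. *)

From Stdlib Require Import Classical ClassicalEpsilon ProofIrrelevance.

Lemma sig_eq {A : Type} (Q : A -> Prop) (u v : {a | Q a}) :
  proj1_sig u = proj1_sig v -> u = v.
Proof. apply eq_sig_hprop; intros; apply proof_irrelevance. Qed.

Section WellOrder.

Variables (T : Type) (lt : T -> T -> Prop).
Hypothesis W : well_order lt.

Lemma not_lt_trans x y z : ~ lt x y -> ~ lt y z -> ~ lt x z.
Proof.
  destruct W as [irr [tr [tot _]]]; intros Hxy Hyz Hxz.
  destruct (tot x y) as [H | [<- | H]]; eauto.
Qed.

Lemma eventually_and (Q1 Q2 : T -> Prop) :
  eventually lt Q1 -> eventually lt Q2 -> eventually lt (fun i => Q1 i /\ Q2 i).
Proof.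
  destruct W as [irr [tr [tot _]]]; intros [i1 H1] [i2 H2].
  destruct (tot i1 i2) as [H | [<- | H]].
  - exists i2; split; [apply H1 | apply H2]; eauto using not_lt_trans.
  - exists i1; auto.
  - exists i1; split; [apply H1 | apply H2]; eauto using not_lt_trans.
Qed.

Lemma eventually_witness (Q : T -> Prop) : eventually lt Q -> exists i, Q i.
Proof. destruct W as [irr _]; intros [i0 H]; exists i0; apply H, irr. Qed.

End WellOrder.

Lemma cardinal_unbounded_of_injection {T : Type} (lt : T -> T -> Prop) (S : T -> Prop) :
  is_cardinal T lt -> (exists e : T -> {x | S x}, injective e) -> unbounded lt S.
Proof.
  intros [_ Hcard] [e He] x; apply NNPP; intro Hx.
  assert (HS : forall y, S y -> lt y x)
    by (intros y Hy; apply NNPP; intro; apply Hx; eauto).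
  apply (Hcard x).
  exists (fun t => exist _ (proj1_sig (e t)) (HS _ (proj2_sig (e t)))).
  intros a b Eab; apply He, sig_eq.
  exact (f_equal (@proj1_sig _ _) Eab).
Qed.

Lemma equipotent_injection {A B : Type} :
  equipotent A B -> exists e : B -> A, injective e.
Proof.
  intros [g [e [_ Hge]]]; exists e; intros a b Eab.
  rewrite <- (Hge a), <- (Hge b), Eab; reflexivity.
Qed.

Lemma equipotent_range {X Y : Type} (f : X -> Y) :
  injective f -> equipotent {y | exists x, y = f x} X.
Proof.
  intro finj.
  exists (fun y : {y | exists x, y = f x} =>
            proj1_sig (constructive_indefinite_description _ (proj2_sig y))).
  exists (fun x => exist _ (f x) (ex_intro _ x eq_refl)).
  split.
  - intros y; apply sig_eq; simpl.
    destruct (constructive_indefinite_description _ _); auto.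
  - intros x; simpl.
    destruct (constructive_indefinite_description _ _) as [x' E]; simpl; auto.
Qed.

Lemma injection_into_preimage {X Y Z : Type} (f : X -> Y) (A : Y -> Prop) :
  (forall y, A y -> exists x, y = f x) ->
  (exists e : Z -> {y | A y}, injective e) ->
  exists e : Z -> {x | A (f x)}, injective e.
Proof.
  intros HA [e He].
  assert (Hpre : forall z, exists x : {x | A (f x)}, proj1_sig (e z) = f (proj1_sig x)).
  { intro z; destruct (HA _ (proj2_sig (e z))) as [x Ex].
    assert (Ax : A (f x)) by (rewrite <- Ex; exact (proj2_sig (e z))).
    exists (exist _ x Ax); exact Ex. }
  destruct (choice _ Hpre) as [c Hc]; exists c; intros a b Eab.
  apply He, sig_eq; rewrite Hc, Hc, Eab; reflexivity.
Qed.

Lemma prod_bound_off_ub {K M : Type} (ltM : M -> M -> Prop) (mu : K -> M)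
    (F0 : (K -> M) -> Prop) (x : M) :
  (forall i, exists y, ltM y (mu i)) ->
  (forall i, ltM x (mu i) -> ~ ub ltM mu F0 i) ->
  exists h, in_prod ltM mu h /\
    forall i, ltM x (mu i) -> forall g, F0 g -> ~ ltM (h i) (g i).
Proof.
  intros Hne Hoff.
  assert (Hh : forall i, exists y, ltM y (mu i) /\
             (ltM x (mu i) -> forall g, F0 g -> ~ ltM y (g i))).
  { intro i; destruct (classic (ltM x (mu i))) as [Hx | Hx].
    - destruct (not_all_ex_not _ _ (Hoff i Hx)) as [y Hy].
      destruct (imply_to_and _ _ Hy) as [Hy1 Hy2].
      exists y; split; [exact Hy1 |].
      intros _ g Hg Hlt; apply Hy2; eauto.
    - destruct (Hne i) as [y Hy]; exists y; split; [exact Hy | contradiction]. }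
  destruct (choice _ Hh) as [h Hhp].
  exists h; split; [intro i; apply Hhp | apply Hhp].
Qed.

Section Scale.

Context {K M P : Type} {ltK : K -> K -> Prop} {ltM : M -> M -> Prop}
  {ltP : P -> P -> Prop} {mu : K -> M} {f : P -> K -> M}.
Hypotheses (WK : well_order ltK) (WM : well_order ltM) (WP : well_order ltP).
Hypothesis mu_increasing : forall i j, ltK i j -> ltM (mu i) (mu j).
Hypothesis mu_cofinal : forall x, exists i, ltM x (mu i).
Hypothesis mu_nonzero : forall i, exists y, ltM y (mu i).
Hypothesis scale : is_scale ltK ltM mu ltP f.

Lemma eventually_below_mu x : eventually ltK (fun i => ltM x (mu i)).
Proof.
  destruct WK as [_ [_ [totK _]]], WM as [_ [trM _]].
  destruct (mu_cofinal x) as [i0 Hi0]; exists i0; intros i Hi.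
  destruct (totK i0 i) as [H | [<- | H]]; [eauto | exact Hi0 | contradiction].
Qed.

Lemma scale_injective : injective f.
Proof.
  destruct WK as [irrK _], WM as [irrM _], WP as [_ [_ [totP _]]].
  destruct scale as [_ [Hinc _]].
  assert (Hneq : forall a b, ltP a b -> f a <> f b).
  { intros a b Hab E; destruct (Hinc _ _ Hab) as [i0 Hi0].
    specialize (Hi0 i0 (irrK i0)); rewrite E in Hi0; exact (irrM _ Hi0). }
  intros a b E; destruct (totP a b) as [H | [H | H]]; auto.
  - contradiction (Hneq _ _ H E).
  - contradiction (Hneq _ _ H (eq_sym E)).
Qed.

Lemma eventually_below_scale_mono (h : K -> M) nu nu' : ~ ltP nu' nu ->
  eventually ltK (fun i => ltM (h i) (f nu i)) ->
  eventually ltK (fun i => ltM (h i) (f nu' i)).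
Proof.
  destruct WM as [_ [trM _]], WP as [_ [_ [totP _]]].
  destruct scale as [_ [Hinc _]]; intros Hnu Hh.
  destruct (totP nu nu') as [H | [<- | H]]; [| exact Hh | contradiction].
  destruct (eventually_and _ _ WK _ _ Hh (Hinc _ _ H)) as [i0 Hi0].
  exists i0; intros i Hi; destruct (Hi0 i Hi); eauto.
Qed.

Lemma ub_unbounded_of_cofinal_indices (F0 : (K -> M) -> Prop) :
  unbounded ltP (fun nu => F0 (f nu)) ->
  forall x, exists i, ub ltM mu F0 i /\ ltM x (mu i).
Proof.
  intros Hcof x; apply NNPP; intro Hno.
  destruct (prod_bound_off_ub ltM mu F0 x mu_nonzero) as [h [Hh Hbound]].
  { intros i Hx Hub; apply Hno; eauto. }
  destruct scale as [_ [_ Hcov]].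
  destruct (Hcov h Hh) as [nu Hhnu].
  destruct (Hcof nu) as [nu' [HF0 Hnu']].
  destruct (eventually_witness _ _ WK _
    (eventually_and _ _ WK _ _ (eventually_below_mu x)
      (eventually_below_scale_mono _ _ _ Hnu' Hhnu)))
    as [i [Hx Hhi]].
  exact (Hbound i Hx _ HF0 Hhi).
Qed.

End Scale.

Theorem lemma5p5
  (M : Type) (ltM : M -> M -> Prop)
  (K : Type) (ltK : K -> K -> Prop)
  (mu : K -> M)
  (P : Type) (ltP : P -> P -> Prop)
  (f : P -> K -> M) :
  is_singular M ltM ->
  is_regular K ltK ->
  (forall i j, ltK i j -> ltM (mu i) (mu j)) ->
  (forall x : M, exists i, ltM x (mu i)) ->
  (forall i, is_regular {y : M | ltM y (mu i)} (seg_lt ltM (mu i))) ->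
  is_regular P ltP ->
  is_scale ltK ltM mu ltP f ->
  in_spec_star ltM mu P ltP.
Proof.
  (* Singularity of mu and regularity of cf(mu) are only used through the
     well-orders they carry. *)
  intros [[WM _] _] [[WK _] _] Hmono Hcof Hseg HP Hscale.
  pose proof HP as [HPcard _]; pose proof HPcard as [WP _].
  assert (Hne : forall i, exists y, ltM y (mu i)).
  { intro i; destruct (Hseg i) as [_ [[s _] _]].
    exists (proj1_sig (s 0)); exact (proj2_sig (s 0)). }
  split; [exact HP |].
  exists (fun g => exists nu, g = f nu); split; [| split].
  - intros g [nu ->]; apply (proj1 Hscale).
  - exact (equipotent_range f (scale_injective WK WM WP Hscale)).
  - intros F0 HF0 Heq.
    apply (ub_unbounded_of_cofinal_indices WK WM WP Hmono Hcof Hne Hscale).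
    apply cardinal_unbounded_of_injection; [exact HPcard |].
    exact (injection_into_preimage f F0 HF0 (equipotent_injection Heq)).
Qed.
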